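(* Let $q\ge 3$, $k\ge 1$ and $h\geq 2$ be integers with $h\le \lfloor q/2\rfloor$. Then $$SO(S_{q,h,k})=(2qk-8k+8)\sqrt{2}+(8k-8)\sqrt{5}.$$
   Context: For a finite simple graph $G$, $SO(G)=\sum_{uv\in E(G)}\sqrt{d_u^2+d_v^2}$, where $d_u$ is the degree of $u$ in $G$ (the Sombor index). The spiro-chain $S_{q,h,k}$ is the chain of $k$ disjoint copies $G_1,\ldots,G_k$ of the cycle $C_q$ with respect to vertices $x_i,y_i\in V(G_i)$ at distance $h$ in $G_i$; i.e. it is obtained from the disjoint union of the $k$ cycles by identifying $y_i$ with $x_{i+1}$ for $i=1,\ldots,k-1$. Thus in each cycle the distance between two consecutive contact vertices is $h$. *)

From mathcomp Require Import all_boot all_order all_algebra.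
Unset Printing Implicit Defensive.
Import Order.TTheory GRing.Theory Num.Theory.

Definition deg (T : finType) (e : rel T) (u : T) : nat := #|[set v | e u v]|.

(* Sombor index: sum over edges uv of sqrt(d_u^2 + d_v^2).  Each (unordered)
   edge appears twice as an ordered pair, hence the factor 1/2. *)
Definition sombor (R : rcfType) (T : finType) (e : rel T) : R :=
  2^-1 * \sum_(u : T) \sum_(v : T | e u v)
           Num.sqrt (((deg T e u) ^ 2 + (deg T e v) ^ 2)%N%:R).

(* Disjoint union of k copies G_0..G_{k-1} of C_q; vertex (i,j) is vertex j
   of copy i.  x_i := (i,0), y_i := (i,h). *)
Definition spiro_T (q k : nat) := ('I_k * 'I_q)%type.

Definition cyc_adj (q : nat) (a b : 'I_q) : bool :=
  (a.+1 %% q == b) || (b.+1 %% q == a).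

(* identification y_i = x_{i+1} (symmetrised) *)
Definition glue (q h k : nat) : rel (spiro_T q k) := fun u v =>
  ((u.1.+1 == v.1 :> nat) && (u.2 == h :> nat) && (v.2 == 0 :> nat)) ||
  ((v.1.+1 == u.1 :> nat) && (v.2 == h :> nat) && (u.2 == 0 :> nat)).

Definition same (q h k : nat) : rel (spiro_T q k) := connect (glue q h k).

Definition is_rep (q h k : nat) (u : spiro_T q k) : bool :=
  [forall v, same q h k u v ==> (enum_rank u <= enum_rank v)%N].

(* vertex set of S_{q,h,k}: the equivalence classes *)
Definition spiro_V (q h k : nat) := {u : spiro_T q k | is_rep q h k u}.

Definition spiro_adj (q h k : nat) : rel (spiro_V q h k) := fun u v =>
  (val u != val v) &&
  [exists a : spiro_T q k, exists b : spiro_T q k,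
     [&& same q h k (val u) a, same q h k (val v) b, a.1 == b.1 & cyc_adj q a.2 b.2]].

From mathcomp Require Import all_boot all_order all_algebra zify ring.
Import Order.TTheory GRing.Theory Num.Theory.
Set Implicit Arguments.
Unset Strict Implicit.

(* Gluing y_i to x_(i+1) identifies cycle vertices at most in pairs, so a vertex
   of S_(q,h,k) is a class of one or two cycle vertices and every edge of
   S_(q,h,k) lifts to exactly one arc of the disjoint cycles.  Hence a vertex has
   degree twice the size of its class: 4 for the k-1 cut vertices, 2 otherwise.
   As 2 <= h <= q-2, the contact vertices 0 and h of a cycle are not adjacent, so
   every edge has end degrees (2,2) or (2,4); counting the 2qk arcs and the
   8(k-1) arc ends at contact vertices gives the formula. *)

Lemma connect_return2 (T : finType) (e : rel T) :
  (forall x y z, e x y -> e y z -> x = z) ->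
  forall x y, connect e x y = (x == y) || e x y.
Proof.
move=> e_return x y; apply/idP/idP; last first.
  by case/orP => [/eqP->|exy]; [exact: connect0 | exact: connect1].
case/connectP => p; elim: p x => [|z p IHp] x /=; first by move=> _ ->; rewrite eqxx.
case/andP => exz zp lst; case/orP: (IHp z zp lst) => [/eqP <-|ezy].
  by rewrite exz orbT.
by rewrite (e_return _ _ _ exz ezy) eqxx.
Qed.

Lemma sum_sym_rel (R : nmodType) (T : finType) (r : rel T) (F : T -> T -> R) :
  symmetric r ->
  (\sum_(x : T) \sum_(y | r x y) F x y = \sum_(x : T) \sum_(y | r x y) F y x)%R.
Proof.
move=> r_sym; rewrite (exchange_big_dep predT) //=.
by apply: eq_bigr => y _; apply: eq_bigl => x; rewrite r_sym.
Qed.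

Lemma sum_ord_succ_lt n : \sum_(i < n) ((i.+1 < n) : nat) = n.-1.
Proof.
case: n => [|n]; first by rewrite big_ord0.
rewrite big_ord_recr /= ltnn addn0 (eq_bigr (fun _ => 1)) => [|i _].
  by rewrite sum1_card card_ord.
by rewrite ltnS ltn_ord.
Qed.

Lemma sum_ord_gt0 n : \sum_(i < n) ((0 < i) : nat) = n.-1.
Proof.
case: n => [|n]; first by rewrite big_ord0.
by rewrite big_ord_recl add0n (eq_bigr (fun _ => 1)) // sum1_card card_ord.
Qed.

Lemma sum_ord_eq_andb n m (b : bool) :
  m < n -> \sum_(j < n) (((j == m :> nat) && b) : nat) = b.
Proof.
move=> lt_mn; rewrite (bigD1 (Ordinal lt_mn)) //= eqxx big1 ?addn0 // => j.
by rewrite -val_eqE /= => /negbTE ->.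
Qed.

Lemma sum2_affine_natr (R : comNzRingType) (I J : finType) (P : pred I)
    (Q : I -> pred J) (a c : R) (g : I -> J -> nat) :
  (\sum_(i | P i) \sum_(j | Q i j) (a + c * (g i j)%:R) =
   a * (\sum_(i | P i) \sum_(j | Q i j) 1)%:R
   + c * (\sum_(i | P i) \sum_(j | Q i j) g i j)%:R)%R.
Proof.
rewrite !natr_sum !mulr_sumr -big_split; apply: eq_bigr => i _.
by rewrite !natr_sum !mulr_sumr -big_split; apply: eq_bigr => j _; rewrite mulr1.
Qed.

Lemma sqrtr_sqrM (R : rcfType) (a b : R) :
  (0 <= a)%R -> Num.sqrt (a ^+ 2 * b) = (a * Num.sqrt b)%R.
Proof. by move=> a_ge0; rewrite sqrtrM ?sqrtr_sqr ?ger0_norm ?exprn_ge0. Qed.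

Lemma modSn_lt q j : j < q -> j.+1 %% q = if j.+1 == q then 0 else j.+1.
Proof.
move=> lt_jq; case: eqP => [->|ne]; first by rewrite modnn.
by rewrite modn_small //; lia.
Qed.

Lemma cyc_adjP q (a b : 'I_q) : cyc_adj q a b <->
  (b = a.+1 :> nat \/ (a.+1 = q /\ b = 0 :> nat) \/
   a = b.+1 :> nat \/ (b.+1 = q /\ a = 0 :> nat)).
Proof.
have := ltn_ord a; have := ltn_ord b; rewrite /cyc_adj !modSn_lt //.
by case: ifP => /eqP ?; case: ifP => /eqP ?; move=> ? ?; split; lia.
Qed.

Lemma cyc_adjE q (a b : 'I_q) : cyc_adj q a b = (b == ordS a) || (b == ord_pred a).
Proof. by rewrite /cyc_adj -(can2_eq (@ordSK q) (@ord_predK q)) !(eq_sym b). Qed.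

Lemma cyc_adj_sym q : symmetric (cyc_adj q).
Proof. by move=> a b; rewrite /cyc_adj orbC. Qed.

Lemma card_cyc_adj q (a : 'I_q) : 2 < q -> #|[set b | cyc_adj q a b]| = 2.
Proof.
move=> q_gt2; have -> : [set b | cyc_adj q a b] = [set ordS a; ord_pred a].
  by apply/setP => b; rewrite !inE cyc_adjE.
rewrite cards2 -(inj_eq (@ordS_inj q)) ord_predK -val_eqE /=.
suff -> : (a.+1 %% q).+1 %% q != a by [].
have := ltn_ord a; move: (nat_of_ord a) => i lt_iq.
have [i1q|lt_i1q] := eqVneq i.+1 q; first by rewrite i1q modnn modn_small; lia.
rewrite (modn_small (_ : i.+1 < q)); last by lia.
have [i2q|ne_i2q] := eqVneq i.+2 q; first by rewrite i2q modnn; lia.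
by rewrite modn_small; lia.
Qed.

Section SpiroChain.

Variables q h k : nat.
Hypothesis h_gt1 : 1 < h.
Hypothesis h_lt_pred : h.+1 < q.

Local Notation T := (spiro_T q k).
Local Notation V := (spiro_V q h k).
Local Notation glue := (glue q h k).
Local Notation same := (same q h k).
Local Notation adj := (spiro_adj q h k).

Definition copy_adj (a b : T) := (a.1 == b.1) && cyc_adj q a.2 b.2.

Lemma copy_adj_sym : symmetric copy_adj.
Proof. by move=> a b; rewrite /copy_adj eq_sym cyc_adj_sym. Qed.

Lemma card_copy_adj (a : T) : #|copy_adj a| = 2.
Proof.
transitivity #|[set b | copy_adj a b]|; first by apply: eq_card => b; rewrite inE.
have -> : [set b | copy_adj a b] = pair a.1 @: [set j | cyc_adj q a.2 j].
  apply/setP => -[i j]; rewrite !inE /copy_adj /=.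
  apply/andP/imsetP => [[/eqP <- a2j]|[j' + [-> ->]]]; first by exists j; rewrite ?inE.
  by rewrite inE eqxx.
by rewrite card_imset ?card_cyc_adj //; [lia | move=> j j' []].
Qed.

Lemma glue_sym : symmetric glue.
Proof. by move=> a b; rewrite /glue orbC. Qed.

Lemma glue_copy (a b : T) : glue a b -> a.1 != b.1.
Proof. by case: a b => [[a1 ?] ?] [[b1 ?] ?]; rewrite /glue -val_eqE /=; lia. Qed.

Lemma glue_return (a b c : T) : glue a b -> glue b c -> a = c.
Proof.
case: a b c => [[a1 ?] [a2 ?]] [[b1 ?] [b2 ?]] [[c1 ?] [c2 ?]]; rewrite /glue /= => ab bc.
have e1 : a1 = c1 by lia.
have e2 : a2 = c2 by lia.
by subst; congr pair; exact: val_inj.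
Qed.

Lemma sameE (a b : T) : same a b = (a == b) || glue a b.
Proof. exact: (connect_return2 (@glue_return)). Qed.

Lemma same_sym (a b : T) : same a b = same b a.
Proof. exact: (sym_connect_sym glue_sym). Qed.

Lemma same_trans (a b c : T) : same a b -> same b c -> same a c.
Proof. exact: connect_trans. Qed.

Definition contact (a : T) := [exists b, glue a b].

Lemma contactP (a : T) : contact a <->
  (a.2 = h :> nat /\ a.1.+1 < k) \/ (a.2 = 0 :> nat /\ 0 < a.1).
Proof.
split; first by case/existsP => -[[b1 ?] [b2 ?]]; case: a => [[a1 ?] [a2 ?]]; rewrite /glue /=; lia.
case: a => [[a1 lt_a1k] [a2 lt_a2q]] /= [[a2h lt_a1Sk]|[a20 a1_gt0]]; apply/existsP.
  have q_gt0 : 0 < q by lia.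
  by exists (Ordinal lt_a1Sk, Ordinal q_gt0); rewrite /glue /=; lia.
have lt_a1Pk : a1.-1 < k by lia.
have lt_hq : h < q by lia.
by exists (Ordinal lt_a1Pk, Ordinal lt_hq); rewrite /glue /=; lia.
Qed.

Lemma glue_irr (a : T) : ~~ glue a a.
Proof. by apply/negP => /glue_copy; rewrite eqxx. Qed.

Lemma card_same (a : T) : #|[set b | same a b]| = (contact a).+1.
Proof.
rewrite /contact; case: existsP => [[b ab]|no_glue].
  have -> : [set c | same a c] = [set a; b].
    apply/setP => c; rewrite !inE sameE eq_sym; apply/orP/orP => [[ca|ac]|[/eqP->|/eqP->]].
    - by left.
    - by right; apply/eqP; apply: glue_return ab; rewrite glue_sym.
    - by left.
    - by right.
  by rewrite cards2; case: eqP => // a_eq_b; move: ab; rewrite -a_eq_b (negbTE (glue_irr a)).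
have -> : [set c | same a c] = [set a].
  apply/setP => c; rewrite !inE sameE (eq_sym c); case: eqP => //= _.
  by apply/negP => ac; apply: no_glue; exists c.
by rewrite cards1.
Qed.

Lemma is_rep_same_eq (a b : T) :
  is_rep q h k a -> is_rep q h k b -> same a b -> a = b.
Proof.
move=> /forallP rep_a /forallP rep_b ab; apply: enum_rank_inj; apply/val_inj/eqP.
have ba : same b a by rewrite same_sym.
by rewrite eqn_leq (implyP (rep_a b) ab) (implyP (rep_b a) ba).
Qed.

Definition rep_of (a : T) : T := [arg min_(b < a | same a b) enum_rank b].

Lemma rep_ofP (a : T) : same a (rep_of a) /\ is_rep q h k (rep_of a).
Proof.
rewrite /rep_of; case: arg_minnP => [|b ab b_min]; first exact: connect0.
split=> //; apply/forallP => c; apply/implyP => bc; apply: b_min.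
exact: same_trans ab bc.
Qed.

Definition vertex_of (a : T) : V := exist _ (rep_of a) (proj2 (rep_ofP a)).

Lemma same_vertex_of (a : T) : same a (val (vertex_of a)).
Proof. exact: (proj1 (rep_ofP a)). Qed.

Lemma vertex_ofK (u : V) : vertex_of (val u) = u.
Proof.
apply/val_inj/is_rep_same_eq; [exact: (proj2 (rep_ofP _)) | exact: valP |].
by rewrite same_sym same_vertex_of.
Qed.

Lemma eq_vertex_of (a b : T) : (vertex_of a == vertex_of b) = same a b.
Proof.
apply/eqP/idP => [ab|ab].
  by apply: same_trans (same_vertex_of a) _; rewrite ab same_sym same_vertex_of.
apply/val_inj/is_rep_same_eq; [exact: (proj2 (rep_ofP _)) | exact: (proj2 (rep_ofP _)) |].
apply: same_trans (same_trans ab (same_vertex_of b)).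
by rewrite same_sym same_vertex_of.
Qed.

Lemma same_valE (u : V) (a : T) : same (val u) a = (vertex_of a == u).
Proof. by rewrite -{2}(vertex_ofK u) eq_vertex_of same_sym. Qed.

Lemma copy_adj_not_same (a b : T) : copy_adj a b -> ~~ same a b.
Proof.
case/andP=> /eqP a1b1 a2b2; rewrite sameE negb_or; apply/andP; split.
  apply/negP => /eqP ab; move: a2b2; rewrite ab; move/cyc_adjP; lia.
by apply/negP => /glue_copy; rewrite a1b1 eqxx.
Qed.

Lemma copy_adj_contact (a b : T) : copy_adj a b -> contact a -> contact b -> False.
Proof.
case/andP=> /eqP a1b1 /cyc_adjP a2b2 /contactP ca /contactP cb.
by move: a1b1 => /(congr1 val) /= a1b1; lia.
Qed.

Lemma copy_adj_same_eq (a b a' b' : T) : copy_adj a b -> copy_adj a' b' ->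
  same a a' -> same b b' -> a = a' /\ b = b'.
Proof.
move=> ab a'b'; rewrite !sameE.
have copy_eq a0 b0 : copy_adj a0 b0 -> a0.1 = b0.1 by case/andP => /eqP.
case/orP=> [/eqP ea|aa']; case/orP=> [/eqP eb|bb']; first by [].
- by move/glue_copy: bb'; rewrite -(copy_eq _ _ ab) -(copy_eq _ _ a'b') ea eqxx.
- by move/glue_copy: aa'; rewrite (copy_eq _ _ ab) (copy_eq _ _ a'b') eb eqxx.
- by case: (copy_adj_contact ab); apply/existsP; [exists a' | exists b'].
Qed.

Definition arcs_from (u : V) := [set p : T * T | same (val u) p.1 && copy_adj p.1 p.2].

Lemma arcs_from_inj (u : V) : {in arcs_from u &, injective (fun p => vertex_of p.2)}.
Proof.
move=> [a b] [a' b']; rewrite !inE /= => /andP[ua ab] /andP[ua' a'b'] /eqP.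
rewrite eq_vertex_of => bb'.
have aa' : same a a' by apply: same_trans ua'; rewrite same_sym.
by case: (copy_adj_same_eq ab a'b' aa' bb') => -> ->.
Qed.

Lemma spiro_adjE (u v : V) : adj u v = (v \in [set vertex_of p.2 | p in arcs_from u]).
Proof.
apply/idP/imsetP => [|[[a b]]].
  case/andP=> _ /existsP[a /existsP[b /and4P[ua vb a1b1 a2b2]]].
  exists (a, b); first by rewrite inE /= ua /copy_adj a1b1.
  by apply/eqP; rewrite eq_sym -same_valE.
rewrite inE /= => /andP[ua ab] ->; apply/andP; split.
  apply/negP => /eqP /val_inj eq_u.
  have ub : same (val u) b by rewrite same_valE eq_u.
  by move: (copy_adj_not_same ab); rewrite (same_trans _ ub) // same_sym.
apply/existsP; exists a; apply/existsP; exists b.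
by case/andP: ab => -> ->; rewrite ua same_valE eqxx.
Qed.

Lemma sum_spiro_adj (R : nmodType) (u : V) (G : V -> R) :
  (\sum_(v | adj u v) G v =
   \sum_(a | same (val u) a) \sum_(b | copy_adj a b) G (vertex_of b))%R.
Proof.
rewrite pair_big_dep (eq_bigl _ _ (spiro_adjE u)) big_imset /=; last exact: arcs_from_inj.
by apply: eq_bigl => p; rewrite inE.
Qed.

Lemma deg_vertex_of (a : T) : deg V adj (vertex_of a) = 2 * (contact a).+1.
Proof.
rewrite /deg -sum1_card (eq_bigl (adj (vertex_of a))) => [|v]; last by rewrite inE.
rewrite sum_spiro_adj (eq_bigr (fun=> 2)) => [|c _]; last by rewrite sum1_card card_copy_adj.
rewrite (eq_bigl (fun c => c \in [set b | same a b])) => [|c].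
  by rewrite sum_nat_const card_same mulnC.
by rewrite in_set same_valE eq_vertex_of same_sym.
Qed.

Lemma sum2_spiro_adj (R : nmodType) (F : V -> V -> R) :
  (\sum_(u : V) \sum_(v | adj u v) F u v =
   \sum_(a : T) \sum_(b | copy_adj a b) F (vertex_of a) (vertex_of b))%R.
Proof.
rewrite [RHS](partition_big vertex_of predT) //=; apply: eq_bigr => u _.
by rewrite sum_spiro_adj; apply: eq_big => [a|a]; rewrite same_valE // => /eqP ->.
Qed.

Lemma contact_nat (a : T) : (contact a : nat) =
  ((a.2 == h :> nat) && (a.1.+1 < k)) + ((a.2 == 0 :> nat) && (0 < a.1)).
Proof.
by have := contactP a; case: (contact a) => -[ca ac]; [move: (ca isT) | move: ac]; lia.
Qed.

Lemma sum_contact : \sum_(a : T) (contact a : nat) = 2 * k.-1.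
Proof.
rewrite -(pair_big predT predT (fun i j => contact (i, j) : nat)) /=.
rewrite (eq_bigr (fun i : 'I_k => ((i.+1 < k) : nat) + ((0 < i) : nat))) => [|i _].
  by rewrite big_split /= sum_ord_succ_lt sum_ord_gt0 addnn mul2n.
under eq_bigr do rewrite contact_nat /=.
by rewrite big_split /= !sum_ord_eq_andb //; lia.
Qed.

Lemma sum_copy_adj_const (a : T) n : \sum_(b | copy_adj a b) n = 2 * n.
Proof. by rewrite sum_nat_const card_copy_adj. Qed.

Lemma count_arcs : \sum_(a : T) \sum_(b | copy_adj a b) 1 = 2 * (k * q).
Proof.
rewrite (eq_bigr (fun=> 2)) => [|a _]; last exact: sum_copy_adj_const.
by rewrite sum_nat_const card_prod !card_ord mulnC.
Qed.

Lemma sum_arcs_contact :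
  \sum_(a : T) \sum_(b | copy_adj a b) (contact a + contact b) = 4 * (2 * k.-1).
Proof.
under eq_bigr do rewrite big_split /=.
rewrite big_split /= (sum_sym_rel (fun _ b => contact b : nat) copy_adj_sym) /=.
under eq_bigr do rewrite sum_copy_adj_const.
by rewrite -big_distrr /= sum_contact; lia.
Qed.

Lemma sombor_spiro_arcs (R : rcfType) : sombor R V adj =
  (2^-1 * \sum_(a : T) \sum_(b | copy_adj a b)
     Num.sqrt (((2 * (contact a).+1) ^ 2 + (2 * (contact b).+1) ^ 2)%N%:R))%R.
Proof.
rewrite /sombor sum2_spiro_adj; congr (_ * _)%R.
by apply: eq_bigr => a _; apply: eq_bigr => b _; rewrite !deg_vertex_of.
Qed.

Lemma sombor_weight (R : rcfType) (a b : T) : copy_adj a b ->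
  Num.sqrt (((2 * (contact a).+1) ^ 2 + (2 * (contact b).+1) ^ 2)%N%:R : R) =
  (2 * Num.sqrt 2 + 2 * (Num.sqrt 5 - Num.sqrt 2) * (contact a + contact b)%N%:R)%R.
Proof.
move=> ab; have := copy_adj_contact ab.
have sqrt8 : Num.sqrt (8 : R) = (2 * Num.sqrt 2)%R.
  by rewrite -sqrtr_sqrM ?ler0n //; congr Num.sqrt; ring.
have sqrt20 : Num.sqrt (20 : R) = (2 * Num.sqrt 5)%R.
  by rewrite -sqrtr_sqrM ?ler0n //; congr Num.sqrt; ring.
case: (contact a) (contact b) => [] [] /= => [/(_ isT isT) []|_|_|_].
- by rewrite -[(_ + _)%N]/20%N sqrt20; ring.
- by rewrite -[(_ + _)%N]/20%N sqrt20; ring.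
- by rewrite -[(_ + _)%N]/8%N sqrt8; ring.
Qed.

Local Open Scope ring_scope.

Lemma sombor_spiro (R : rcfType) : (0 < k)%N ->
  sombor R V adj =
    (2 * q%:R * k%:R - 8 * k%:R + 8) * Num.sqrt 2 + (8 * k%:R - 8) * Num.sqrt 5.
Proof.
move=> k_gt0; rewrite sombor_spiro_arcs.
rewrite (eq_bigr _ (fun a _ => eq_bigr _ (fun b => @sombor_weight R a b))).
rewrite sum2_affine_natr count_arcs sum_arcs_contact !natrM.
have -> : k%:R = (k.-1)%:R + 1 :> R by rewrite natr1 prednK.
by field.
Qed.

End SpiroChain.

Unset Implicit Arguments.
Local Open Scope ring_scope.

Theorem mainTheorem7 (R : rcfType) (q h k : nat) :
  (3 <= q)%N -> (1 <= k)%N -> (2 <= h)%N -> (h <= q./2)%N ->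
  sombor R (spiro_V q h k) (spiro_adj q h k) =
    (2 * q%:R * k%:R - 8 * k%:R + 8) * Num.sqrt (2 : R)
    + (8 * k%:R - 8) * Num.sqrt (5 : R).
Proof.
(* [3 <= q] is implied by [2 <= h <= q./2]. *)
move=> _ k_gt0 h_gt1 h_le_half.
by apply: sombor_spiro; lia.
Qed.
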